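(* Let $\epsilon>0$, $\delta\in(0,1)$, and $x\ge 4\epsilon$ with $xn\ge I_{max}$, and let $\mathcal{R}$ consist of $M=\frac{48x}{\epsilon^2}\ln\frac{2n}{\delta}$ independently generated random RR sets. Then with probability at least $1-\delta_2$, every $u\in V$ with $I_u\le(x-2\epsilon)n$ satisfies $\mathcal{F_R}(u)\le x-\epsilon$, where $\delta_2=n\left(\frac{\delta}{2n}\right)^{16}$.
   Context: $G=\langle V,E,w\rangle$ is a network with $n=|V|$ under the Linear Threshold or Independent Cascade model (live-edge form: LT — each node $v$ independently selects at most one incoming live edge, $(u,v)$ with probability $w_{uv}/W_v$ where $W_v=w_v+\sum_u w_{uv}$ includes a self-weight $w_v$; IC — each edge $(u,v)$ live independently with probability $w_{uv}$). $I_u$ is the expected number of nodes reachable from $u$ via live edges and $I_{max}=\max_u I_u$. A random RR set is the set of nodes that can reach a uniformly random node $v\in V$ via live edges in a freshly sampled live-edge graph. $\mathcal{F_R}(u)$ is the fraction of RR sets in $\mathcal{R}$ containing $u$. *)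

From HB Require Import structures.
From mathcomp Require Import all_boot all_order all_algebra.
From mathcomp Require Import all_classical all_reals all_analysis.
Set Implicit Arguments. Unset Strict Implicit. Unset Printing Implicit Defensive.
Import Order.TTheory GRing.Theory Num.Theory.
Local Open Scope ring_scope.

Section InfluenceDefs.
Variable R : realType.
Variable n : nat.

(* ---------- Generic live-edge model ----------
   A live-edge model is a finite sample space Omega, a probability
   weight p on it, and for every outcome a live-edge relation on V = 'I_n
   (live g u v  <=>  edge (u,v) is live in outcome g). *)

Section Generic.
Variable Omega : finType.
Variable p : Omega -> R.
Variable live : Omega -> rel 'I_n.

Definition reach_set (g : Omega) (u : 'I_n) : {set 'I_n} :=
  [set v | connect (live g) u v].

Definition influence (u : 'I_n) : R :=
  \sum_(g : Omega) p g * (#|reach_set g u|)%:R.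

Definition Imax : R := \big[Num.max/0]_(u : 'I_n) influence u.

(* A single RR-set sample: a live-edge outcome g and a target node v
   (uniform on V, independent of g).  The RR set is the set of nodes
   that can reach v via live edges in g. *)
Definition RRset (s : Omega * 'I_n) : {set 'I_n} :=
  [set u | connect (live s.1) u s.2].

Definition prob1 (s : Omega * 'I_n) : R := p s.1 / n%:R.

Definition probM (M : nat) (S : {ffun 'I_M -> Omega * 'I_n}) : R :=
  \prod_(i < M) prob1 (S i).

Definition fracRR (M : nat) (S : {ffun 'I_M -> Omega * 'I_n}) (u : 'I_n) : R :=
  (#|[set i : 'I_M | u \in RRset (S i)]|)%:R / M%:R.

Definition probEvent (M : nat) (E : pred {ffun 'I_M -> Omega * 'I_n}) : R :=
  \sum_(S | E S) probM S.

End Generic.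

(* ---------- Independent Cascade ----------
   w u v = w_{uv} (0 if (u,v) is not an edge); each edge live
   independently with probability w_{uv}. *)
Definition IC_weights (w : 'I_n -> 'I_n -> R) : Prop :=
  forall u v, 0 <= w u v <= 1.

Definition IC_space := {ffun 'I_n * 'I_n -> bool}.

Definition IC_prob (w : 'I_n -> 'I_n -> R) (g : IC_space) : R :=
  \prod_(e : 'I_n * 'I_n) (if g e then w e.1 e.2 else 1 - w e.1 e.2).

Definition IC_live (g : IC_space) : rel 'I_n := fun u v => g (u, v).

(* ---------- Linear Threshold ----------
   Each node v independently selects at most one incoming live edge:
   (u,v) with prob. w_{uv}/W_v, none with prob. w_v/W_v,
   where W_v = w_v + sum_u w_{uv} (sw v = self-weight w_v). *)
Definition LT_W (w : 'I_n -> 'I_n -> R) (sw : 'I_n -> R) (v : 'I_n) : R :=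
  sw v + \sum_(u : 'I_n) w u v.

Definition LT_weights (w : 'I_n -> 'I_n -> R) (sw : 'I_n -> R) : Prop :=
  (forall u v, 0 <= w u v) /\ (forall v, 0 <= sw v) /\ (forall v, 0 < LT_W w sw v).

Definition LT_space := {ffun 'I_n -> option 'I_n}.

Definition LT_prob (w : 'I_n -> 'I_n -> R) (sw : 'I_n -> R) (g : LT_space) : R :=
  \prod_(v : 'I_n)
     (match g v with
      | Some u => w u v / LT_W w sw v
      | None => sw v / LT_W w sw v
      end).

Definition LT_live (g : LT_space) : rel 'I_n := fun u v => g v == Some u.

End InfluenceDefs.
Arguments probEvent {R n Omega} p M E.
Arguments fracRR {R n Omega} live {M} S u.

Definition numRR (R : realType) (n : nat) (eps delta x : R) : nat :=
  `|Num.ceil (48 * x / eps ^+ 2 * ln (2 * n%:R / delta))|%N.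

Definition delta2 (R : realType) (n : nat) (delta : R) : R :=
  n%:R * (delta / (2 * n%:R)) ^+ 16.

From HB Require Import structures.
From mathcomp Require Import all_boot all_order all_algebra.
From mathcomp Require Import all_classical all_reals all_analysis.
From mathcomp Require Import ring lra.
Set Implicit Arguments. Unset Strict Implicit. Unset Printing Implicit Defensive.
Import Order.TTheory GRing.Theory Num.Theory.
Local Open Scope ring_scope.

(* The M RR sets are i.i.d. samples, and u lies in one of them with probability
   I_u / n (the live-edge graph and the target are independent, and u reaches a
   uniform target in I_u / n of the cases on average).  Hence M F_R(u) is a sum
   of M Bernoulli(I_u / n) variables.  A Chernoff bound with parameter
   lambda = 2 eps / (3 x) shows that exceeding x - eps when I_u / n <= x - 2 eps
   has probability at most exp(- M eps^2 / (3 x)) <= (delta / (2 n))^16 for the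
   chosen M; a union bound over the n nodes gives delta_2.  The argument is the
   same for every live-edge model, so IC and LT only need their live-edge
   distributions to be probability distributions. *)

Lemma expR_le_invr_1B (R : realType) (u : R) : u < 1 -> expR u <= (1 - u)^-1.
Proof.
move=> u_lt1; rewrite -[expR u]invrK lef_pV2 ?posrE ?invr_gt0 ?expR_gt0 ?subr_gt0 //.
by rewrite -expRN -[1 - u]/(1 + - u) expR_ge1Dx.
Qed.

Lemma chernoff_exponent (R : realType) (x eps q : R) :
  0 < eps -> 4 * eps <= x -> 0 <= q <= x - 2 * eps ->
  q * (expR (2 * eps / (3 * x)) - 1) - 2 * eps / (3 * x) * (x - eps)
    <= - (eps ^+ 2 / (3 * x)).
Proof.
move=> eps_gt0 x_ge /andP[q_ge0 q_le].
have x_gt0 : 0 < x by lra.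
set u := eps / (3 * x).
have u_gt0 : 0 < u by rewrite divr_gt0 //; lra.
have eps_u : eps = 3 * u * x by rewrite /u; field; lra.
have u_le : u <= 1 / 12 by rewrite ler_pdivrMr; [rewrite eps_u; nra | lra].
have -> : 2 * eps / (3 * x) = u + u by rewrite /u; field; lra.
have -> : eps ^+ 2 / (3 * x) = 3 * u ^+ 2 * x by rewrite eps_u; field; lra.
set E := (1 - u)^-1.
have E_1u : E * (1 - u) = 1 by rewrite mulVf //; lra.
have expR_le : expR (u + u) <= E ^+ 2.
  by rewrite expRD expr2 ler_pM ?expR_ge0 ?expR_le_invr_1B //; lra.
(* With [E = 1/(1-u)], the claim reduces to [u^3 (14 - 9u) >= 0]. *)
have key : (1 - 6 * u) * (E ^+ 2 - 1) <= 2 * u - 9 * u ^+ 2.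
  have : (1 - 6 * u) * (2 * u - u ^+ 2) <= (2 * u - 9 * u ^+ 2) * (1 - u) ^+ 2.
    rewrite -subr_ge0.
    have -> : (2 * u - 9 * u ^+ 2) * (1 - u) ^+ 2 - (1 - 6 * u) * (2 * u - u ^+ 2)
              = u ^+ 3 * (14 - 9 * u) by ring.
    by rewrite mulr_ge0 ?exprn_ge0 ?ltW //; lra.
  have -> : 2 * u - u ^+ 2 = (E ^+ 2 - 1) * (1 - u) ^+ 2.
    by rewrite mulrBl mul1r -exprMn E_1u; ring.
  by rewrite mulrA ler_pM2r // exprn_gt0 //; lra.
have expR_ge1 : 1 <= expR (u + u) by have := expR_ge1Dx (u + u); lra.
have q_exp : q * (expR (u + u) - 1) <= (x - 6 * u * x) * (E ^+ 2 - 1).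
  by apply: ler_pM; lra.
have x_key := ler_wpM2l (ltW x_gt0) key.
rewrite eps_u; nra.
Qed.

Lemma expR_Nmul_ln (R : realType) (k : nat) (y : R) :
  0 < y -> expR (- (k%:R * ln y)) = (y ^-1) ^+ k.
Proof. by move=> y_gt0; rewrite -mulrN expRM_natl expRN lnK. Qed.

Section IidSamples.
Variables (R : realType) (T : finType) (q : T -> R).
Hypotheses (q_ge0 : forall t, 0 <= q t) (q_sum1 : \sum_t q t = 1).

Definition iid_prob (M : nat) (E : pred {ffun 'I_M -> T}) : R :=
  \sum_(S | E S) \prod_(i < M) q (S i).
Arguments iid_prob : clear implicits.

Lemma iid_weight_ge0 M (S : {ffun 'I_M -> T}) : 0 <= \prod_(i < M) q (S i).
Proof. by apply: prodr_ge0. Qed.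

Lemma iid_weight_sum1 M : \sum_(S : {ffun 'I_M -> T}) \prod_(i < M) q (S i) = 1.
Proof.
by rewrite -(bigA_distr_bigA (fun _ => q)) /= q_sum1 prodr_const expr1n.
Qed.

Lemma iid_probC M (E : pred {ffun 'I_M -> T}) :
  iid_prob M E = 1 - iid_prob M (predC E).
Proof. by rewrite -(iid_weight_sum1 M) (bigID E) /= addrK. Qed.

Lemma iid_prob_union_bound M (I : finType) (P : I -> pred {ffun 'I_M -> T}) :
  iid_prob M (predC (fun S => [forall i, P i S])) <= \sum_i iid_prob M (predC (P i)).
Proof.
rewrite /iid_prob big_mkcond /=.
under [X in _ <= X]eq_bigr do rewrite big_mkcond /=.
rewrite exchange_big /=; apply: ler_sum => S _.
have sum_ge0 (J : pred I) :
  0 <= \sum_(i | J i) (if ~~ P i S then \prod_k q (S k) else 0).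
  by apply: sumr_ge0 => i _; case: ifP => // _; apply: iid_weight_ge0.
case: forallP => [_|/existsNP [i /negP Pi]] /=; first exact: (sum_ge0 predT).
by rewrite (bigD1 i) //= Pi lerDl sum_ge0.
Qed.

Lemma iid_count_mgf M (A : pred T) (lam : R) :
  \sum_(S : {ffun 'I_M -> T})
      \prod_(i < M) q (S i) * expR (lam * (#|[set i | S i \in A]|)%:R)
  = (1 + (\sum_(t in A) q t) * (expR lam - 1)) ^+ M.
Proof.
have one_sample : \sum_t q t * expR (lam * (t \in A)%:R)
                  = 1 + (\sum_(t in A) q t) * (expR lam - 1).
  transitivity (\sum_t (q t + (if t \in A then q t else 0) * (expR lam - 1))).
    by apply: eq_bigr => t _; case: (t \in A); rewrite /= ?mulr1 ?mulr0 ?expR0; ring.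
  by rewrite big_split /= q_sum1 -mulr_suml -big_mkcond.
rewrite -(congr1 (fun r => r ^+ M) one_sample) -[in RHS](card_ord M) -prodr_const.
rewrite (bigA_distr_bigA (fun (_ : 'I_M) (t : T) => q t * expR (lam * (t \in A)%:R))).
apply: eq_bigr => S _; rewrite big_split /= -expR_sum -mulr_sumr -natr_sum.
congr (_ * expR (lam * _%:R)).
rewrite cardsE -sum1_card big_mkcond; apply: eq_bigr => i _.
by rewrite unfold_in /= -[A (S i)]/(S i \in A); case: (S i \in A).
Qed.

Lemma iid_chernoff M (A : pred T) (lam a : R) : 0 <= lam ->
  iid_prob M (fun S => a * M%:R < (#|[set i | S i \in A]|)%:R)
  <= expR (M%:R * ((\sum_(t in A) q t) * (expR lam - 1) - lam * a)).
Proof.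
move=> lam_ge0; set qA := \sum_(t in A) q t.
have qA_ge0 : 0 <= qA by apply: sumr_ge0.
have markov : iid_prob M (fun S => a * M%:R < (#|[set i | S i \in A]|)%:R)
    <= expR (- (lam * a * M%:R)) * (1 + qA * (expR lam - 1)) ^+ M.
  rewrite -iid_count_mgf mulr_sumr /iid_prob big_mkcond /=.
  apply: ler_sum => S _; rewrite mulrCA.
  set w := \prod_i q (S i); set c := (#|_|)%:R.
  have w_ge0 : 0 <= w by apply: iid_weight_ge0.
  case: ifP => [tail|_]; last by rewrite !mulr_ge0 ?expR_ge0.
  rewrite -[X in X <= _]mulr1 ler_wpM2l // -expRD.
  (* Markov: on the tail event the exponent is nonnegative. *)
  have := expR_ge1Dx (- (lam * a * M%:R) + lam * c).
  suff : 0 <= - (lam * a * M%:R) + lam * c by lra.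
  by rewrite -mulrA addrC subr_ge0 ler_wpM2l // (ltW tail).
apply: (le_trans markov).
have exp_ge1 : 0 <= expR lam - 1 by have := expR_ge1Dx lam; lra.
have -> : M%:R * (qA * (expR lam - 1) - lam * a)
          = - (lam * a * M%:R) + M%:R * (qA * (expR lam - 1)) by ring.
rewrite expRD expRM_natl ler_wpM2l ?expR_ge0 //.
rewrite lerXn2r ?nnegrE ?expR_ge0 ?expR_ge1Dx //.
by rewrite addr_ge0 ?mulr_ge0.
Qed.

End IidSamples.
Arguments iid_prob {R T} q M E.

Lemma ln_2n_div_gt0 (R : realType) (n : nat) (delta : R) :
  (0 < n)%N -> 0 < delta < 1 -> 0 < ln (2 * n%:R / delta).
Proof.
move=> n_gt0 /andP[delta_gt0 delta_lt1].
have n_ge1 : 1 <= n%:R :> R by rewrite ler1n.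
by rewrite ln_gt0 // ltr_pdivlMr //; lra.
Qed.

Lemma numRR_ge (R : realType) (n : nat) (eps delta x : R) :
  (0 < n)%N -> 0 < eps -> 0 < delta < 1 -> 0 < x ->
  16 * ln (2 * n%:R / delta) <= (numRR n eps delta x)%:R * (eps ^+ 2 / (3 * x)).
Proof.
move=> n_gt0 eps_gt0 delta01 x_gt0.
have L_gt0 := ln_2n_div_gt0 n_gt0 delta01.
set z := 48 * x / eps ^+ 2 * ln (2 * n%:R / delta).
have z_ge0 : 0 <= z by rewrite !mulr_ge0 ?invr_ge0 ?exprn_ge0 // ltW.
have z_le : z <= (numRR n eps delta x)%:R.
  by rewrite /numRR natr_absz ger0_norm ?ceil_ge // ceil_ge0 (lt_le_trans _ z_ge0).
have c_ge0 : 0 <= eps ^+ 2 / (3 * x) by rewrite divr_ge0 ?exprn_ge0 ?mulr_ge0 // ltW.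
have -> : 16 * ln (2 * n%:R / delta) = z * (eps ^+ 2 / (3 * x)).
  by rewrite /z; field; rewrite !gt_eqF.
by rewrite ler_wpM2r.
Qed.

Section LiveEdge.
Variables (R : realType) (n : nat) (Omega : finType) (p : Omega -> R).
Variable live : Omega -> rel 'I_n.
Hypotheses (n_gt0 : (0 < n)%N) (p_ge0 : forall g, 0 <= p g) (p_sum1 : \sum_g p g = 1).

Lemma prob1_ge0 (s : Omega * 'I_n) : 0 <= prob1 p s.
Proof. by rewrite divr_ge0 ?ler0n. Qed.

Lemma prob1_sum1 : \sum_(s : Omega * 'I_n) prob1 p s = 1.
Proof.
rewrite -(pair_bigA _ (fun g v => prob1 p (g, v))) /= -p_sum1.
apply: eq_bigr => g _; rewrite /prob1 /= sumr_const card_ord.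
by rewrite -[X in X = _]mulr_natr divfK // pnatr_eq0 -lt0n.
Qed.

Lemma sum_prob1_RRset_mem (u : 'I_n) :
  \sum_(s | u \in RRset live s) prob1 p s = influence p live u / n%:R.
Proof.
rewrite big_mkcond.
rewrite -(pair_bigA _ (fun g v => if u \in RRset live (g, v) then prob1 p (g, v) else 0)) /=.
rewrite /influence mulr_suml; apply: eq_bigr => g _.
rewrite -big_mkcond (eq_bigl [in reach_set live g u]) => [|v]; last first.
  by rewrite /RRset /reach_set !inE.
by rewrite /prob1 /= sumr_const -[_ *+ #|_|]mulr_natr mulrAC.
Qed.

Lemma RR_fraction_tail (u : 'I_n) (eps delta x : R) :
  0 < eps -> 0 < delta < 1 -> 4 * eps <= x ->
  influence p live u <= (x - 2 * eps) * n%:R ->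
  probEvent p (numRR n eps delta x) (predC (fun S => fracRR live S u <= x - eps))
    <= (delta / (2 * n%:R)) ^+ 16.
Proof.
move=> eps_gt0 delta01 x_ge infl_le; have /andP[delta_gt0 _] := delta01.
have x_gt0 : 0 < x by lra.
have n_pos : 0 < n%:R :> R by rewrite ltr0n.
set M := numRR n eps delta x.
have M_ge := numRR_ge n_gt0 eps_gt0 delta01 x_gt0; rewrite -/M in M_ge.
have c_gt0 : 0 < eps ^+ 2 / (3 * x) by rewrite divr_gt0 ?exprn_gt0 //; lra.
have M_pos : 0 < M%:R :> R.
  rewrite -(pmulr_lgt0 _ c_gt0); apply: lt_le_trans M_ge.
  by rewrite mulr_gt0 // ln_2n_div_gt0.
set A := fun s => u \in RRset live s.
have -> : probEvent p M (predC (fun S => fracRR live S u <= x - eps))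
        = iid_prob (prob1 p) M (fun S => (x - eps) * M%:R < (#|[set i | S i \in A]|)%:R).
  by apply: eq_bigl => S; rewrite /= -ltNge ltr_pdivlMr.
have lam_ge0 : 0 <= 2 * eps / (3 * x) by rewrite divr_ge0 //; lra.
apply: le_trans (iid_chernoff prob1_ge0 prob1_sum1 M A (x - eps) lam_ge0) _.
have -> : \sum_(s in A) prob1 p s = influence p live u / n%:R by exact: sum_prob1_RRset_mem.
have infl_bounds : 0 <= influence p live u / n%:R <= x - 2 * eps.
  by rewrite divr_ge0 ?ler_pdivrMr ?sumr_ge0 // => g _; rewrite mulr_ge0.
have exponent := ler_wpM2l (ltW M_pos) (chernoff_exponent eps_gt0 x_ge infl_bounds).
have y_gt0 : 0 < 2 * n%:R / delta by rewrite divr_gt0 ?mulr_gt0.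
rewrite -[delta / _]invf_div -expR_Nmul_ln // ler_expR (le_trans exponent) //.
by rewrite mulrN lerN2.
Qed.

Theorem RR_fraction_bound (eps delta x : R) :
  0 < eps -> 0 < delta < 1 -> 4 * eps <= x ->
  1 - delta2 n delta <=
  probEvent p (numRR n eps delta x)
    (fun S => [forall u : 'I_n,
       (influence p live u <= (x - 2 * eps) * n%:R) ==> (fracRR live S u <= x - eps)]).
Proof.
move=> eps_gt0 delta01 x_ge; have /andP[delta_gt0 _] := delta01.
rewrite /probEvent /probM -/(iid_prob (prob1 p) _ _) (iid_probC prob1_sum1).
rewrite lerD2l lerN2; apply: le_trans (iid_prob_union_bound prob1_ge0 _) _.
have -> : delta2 n delta = \sum_(u : 'I_n) (delta / (2 * n%:R)) ^+ 16.
  by rewrite /delta2 sumr_const card_ord mulr_natl.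
apply: ler_sum => u _.
have [infl_le | _] := boolP (influence p live u <= (x - 2 * eps) * n%:R).
  exact: RR_fraction_tail eps_gt0 delta01 x_ge infl_le.
rewrite /iid_prob big_pred0 //.
by rewrite exprn_ge0 // divr_ge0 ?mulr_ge0 // ltW.
Qed.

End LiveEdge.

Lemma big_option (R : Type) (idx : R) (op : Monoid.com_law idx) (T : finType)
    (F : option T -> R) :
  \big[op/idx]_(o : option T) F o = op (F None) (\big[op/idx]_(t : T) F (Some t)).
Proof.
rewrite (bigD1 None) //=; congr (op _ _).
rewrite (reindex_omap Some id) => [|[]//].
by apply: eq_bigl => t; rewrite eqxx.
Qed.

Lemma IC_prob_ge0 (R : realType) (n : nat) (w : 'I_n -> 'I_n -> R) (g : IC_space n) :
  IC_weights w -> 0 <= IC_prob w g.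
Proof.
move=> w01; apply: prodr_ge0 => e _.
by case: (g e); have /andP[] := w01 e.1 e.2; lra.
Qed.

Lemma IC_prob_sum1 (R : realType) (n : nat) (w : 'I_n -> 'I_n -> R) :
  \sum_(g : IC_space n) IC_prob w g = 1.
Proof.
rewrite -(bigA_distr_bigA (fun e (b : bool) => if b then w e.1 e.2 else 1 - w e.1 e.2)) /=.
by apply: big1 => e _; rewrite big_bool /= addrC subrK.
Qed.

Lemma LT_prob_ge0 (R : realType) (n : nat) (w : 'I_n -> 'I_n -> R) (sw : 'I_n -> R)
    (g : LT_space n) :
  LT_weights w sw -> 0 <= LT_prob w sw g.
Proof.
move=> [w_ge0 [sw_ge0 W_gt0]]; apply: prodr_ge0 => v _.
by case: (g v) => [u|]; rewrite divr_ge0 // ltW.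
Qed.

Lemma LT_prob_sum1 (R : realType) (n : nat) (w : 'I_n -> 'I_n -> R) (sw : 'I_n -> R) :
  LT_weights w sw -> \sum_(g : LT_space n) LT_prob w sw g = 1.
Proof.
move=> [_ [_ W_gt0]].
rewrite -(bigA_distr_bigA (fun v (o : option 'I_n) =>
  if o is Some u then w u v / LT_W w sw v else sw v / LT_W w sw v)) /=.
apply: big1 => v _; rewrite big_option /= -mulr_suml -mulrDl.
by rewrite divff // gt_eqF //; apply: W_gt0.
Qed.

Theorem lemma6p5 (R : realType) (n : nat) (w : 'I_n -> 'I_n -> R) (sw : 'I_n -> R)
    (eps delta x : R) :
  (0 < n)%N -> 0 < eps -> 0 < delta < 1 -> 4 * eps <= x ->
  (* Independent Cascade model *)
  (IC_weights w ->
   Imax (IC_prob w) (@IC_live n) <= x * n%:R ->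
   1 - delta2 n delta <=
   probEvent (IC_prob w) (numRR n eps delta x)
     (fun S => [forall u : 'I_n,
        (influence (IC_prob w) (@IC_live n) u <= (x - 2 * eps) * n%:R) ==>
        (fracRR (@IC_live n) S u <= x - eps)]))
  /\
  (* Linear Threshold model *)
  (LT_weights w sw ->
   Imax (LT_prob w sw) (@LT_live n) <= x * n%:R ->
   1 - delta2 n delta <=
   probEvent (LT_prob w sw) (numRR n eps delta x)
     (fun S => [forall u : 'I_n,
        (influence (LT_prob w sw) (@LT_live n) u <= (x - 2 * eps) * n%:R) ==>
        (fracRR (@LT_live n) S u <= x - eps)])).
Proof.
move=> n_gt0 eps_gt0 delta01 x_ge; split => [w01 _ | w_LT _].
  apply: RR_fraction_bound => //; first by move=> g; apply: IC_prob_ge0.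
  exact: IC_prob_sum1.
apply: RR_fraction_bound => //; first by move=> g; apply: LT_prob_ge0.
exact: LT_prob_sum1.
Qed.
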